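(* Let $(\chi_n)_{n\in\mathbb N}$ be independent Bernoulli random variables with $\mathbb P(\chi_n=1)=p\in(0,1)$. Let $N\ge1$ and let $c$ be a finitely supported real function on the set of multi-indices $\alpha=(\alpha_1,\dots,\alpha_N)\in\mathbb N^N$ with $1\le\alpha_1<\dots<\alpha_N$. Set $\Psi_N(c^2)=\sum_{|\alpha|=N}c(\alpha)^2\chi^\alpha$ with $\chi^\alpha=\prod_{i=1}^N\chi_{\alpha_i}$, $|c|_N^2=\sum_{|\alpha|=N}c(\alpha)^2$ and $\delta_N^2(c)=\max_n\sum_{|\alpha|=N,\,n\in\{\alpha_1,\dots,\alpha_N\}}c(\alpha)^2$, and assume $\delta_N(c)>0$. If $x<(p/2)^N|c|_N^2$, then $$\mathbb P(\Psi_N(c^2)\le x)\le\frac{2e^3}{9}N\exp\Big(-\frac{x^2}{\delta_N^2(c)|c|_N^2}\Big).$$ *)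

From Stdlib Require Import Reals Lra List Sorted.
Import ListNotations.
Open Scope R_scope.

(* Since c is finitely supported, Psi_N(c^2) depends only on chi_1,...,chi_M for
   any M bounding the support of c.  We therefore model the i.i.d. Bernoulli(p)
   sequence through its finite-dimensional marginal on {0,1}^M: an outcome is a
   list of booleans [w] of length M, with chi_n = 1 iff the (n-1)-th entry is true. *)

Fixpoint bool_lists (M : nat) : list (list bool) :=
  match M with
  | O => [[]]
  | S m => map (cons true) (bool_lists m) ++ map (cons false) (bool_lists m)
  end.

Fixpoint weight (p : R) (w : list bool) : R :=
  match w with
  | [] => 1
  | b :: w' => (if b then p else 1 - p) * weight p w'
  end.

Definition sumR (l : list R) : R := fold_right Rplus 0 l.

Fixpoint sublists (k : nat) (l : list nat) : list (list nat) :=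
  match k, l with
  | O, _ => [[]]
  | S _, [] => []
  | S k', x :: l' => map (cons x) (sublists k' l') ++ sublists k l'
  end.

Definition multi_indices (N M : nat) : list (list nat) := sublists N (seq 1 M).

Definition valid_index (N : nat) (a : list nat) : Prop :=
  Sorted lt a /\ length a = N /\ (forall i, In i a -> (1 <= i)%nat).

Definition chi (w : list bool) (n : nat) : R :=
  if nth (n - 1) w false then 1 else 0.

Definition chi_alpha (w : list bool) (a : list nat) : R :=
  fold_right (fun i acc => chi w i * acc) 1 a.

Definition Psi (N M : nat) (c : list nat -> R) (w : list bool) : R :=
  sumR (map (fun a => (c a)^2 * chi_alpha w a) (multi_indices N M)).

Definition normc2 (N M : nat) (c : list nat -> R) : R :=
  sumR (map (fun a => (c a)^2) (multi_indices N M)).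

(* delta_N^2(c) = max_n sum_{a containing n} c(a)^2 (n ranges over 1..M; the
   sums for n > M vanish and all sums are >= 0). *)
Definition delta2 (N M : nat) (c : list nat -> R) : R :=
  fold_right Rmax 0
    (map (fun n => sumR (map (fun a => (c a)^2)
                        (filter (fun a => existsb (Nat.eqb n) a) (multi_indices N M))))
         (seq 1 M)).

Definition deltaN (N M : nat) (c : list nat -> R) : R := sqrt (delta2 N M c).

Definition prob_Psi_le (p : R) (N M : nat) (c : list nat -> R) (x : R) : R :=
  sumR (map (fun w => weight p w * (if Rle_dec (Psi N M c w) x then 1 else 0))
            (bool_lists M)).

(* The truncations Psi_d = sum_a c(a)^2 chi_{a_{d+1}} ... chi_{a_N} interpolate between
   Psi_0 = Psi_N(c^2) and Psi_N = |c|_N^2.  Grouping by the first remaining index n,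
   Psi_d = sum_n chi_n phi_n and Psi_{d+1} = sum_n phi_n, where phi_n depends only on
   the chi_m with m > n.  Peeling the coordinates off one by one with the Bernoulli
   bound p e^{-t} + 1 - p <= e^{-pt + t^2/4} gives a Chernoff bound
   P(Psi_d <= z, p Psi_{d+1} >= 2z) <= exp(-z^2 / (delta^2 |c|^2)), since
   sum_n phi_n^2 <= delta^2 Psi_{d+1} <= delta^2 |c|^2.  Hence
   P(Psi_d <= z) <= exp(-z^2/(delta^2 |c|^2)) + P(Psi_{d+1} <= 2z/p), and iterating
   N times ends at Psi_N = |c|^2 > (2/p)^N x, an impossible event.  This yields the
   bound with the constant 1 <= 2e^3/9. *)

From Stdlib Require Import Reals Lra Lia List Sorted.
From Coquelicot Require Import Coquelicot.
Open Scope R_scope.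

Lemma exp_le_compat (a b : R) : a <= b -> exp a <= exp b.
Proof. intros [H | ->]; [left; apply exp_increasing |]; lra. Qed.

Lemma nonneg_of_deriv_nonneg (f f' : R -> R) :
  (forall s, derivable_pt_lim f s (f' s)) -> f 0 = 0 ->
  (forall s, 0 <= s -> 0 <= f' s) -> forall t, 0 <= t -> 0 <= f t.
Proof.
  intros Df f0 Hf' t Ht.
  destruct (Req_dec t 0) as [-> | Ht0]; [lra |].
  destruct (MVT_cor2 f f' 0 t) as [s [Hs Hst]]; [lra | intros; apply Df |].
  pose proof (Hf' s ltac:(lra)). nra.
Qed.

Lemma bernoulli_exp_moment_le (p t : R) : 0 < p < 1 -> 0 <= t ->
  p * exp (- t) + (1 - p) <= exp (- p * t + t ^ 2 / 4).
Proof.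
  intros Hp Ht.
  set (D := fun s => 1 - p + p * exp (- s)).
  assert (HD : forall s, 0 < D s) by (intro s; unfold D; pose proof (exp_pos (- s)); nra).
  (* h vanishes to first order at 0 and is convex, since h'' = 1/2 - Var and the
     variance of a Bernoulli variable is at most 1/4 *)
  set (h := fun s => - p * s + s ^ 2 / 4 - ln (D s)).
  set (h1 := fun s => - p + s / 2 + p * exp (- s) / D s).
  set (h2 := fun s => / 2 - p * (1 - p) * exp (- s) / D s ^ 2).
  assert (Dh : forall s, derivable_pt_lim h s (h1 s)).
  { intro s; apply is_derive_Reals; unfold h, h1.
    pose proof (HD s); unfold D in *; auto_derive; [lra | field; lra]. }
  assert (Dh1 : forall s, derivable_pt_lim h1 s (h2 s)).
  { intro s; apply is_derive_Reals; unfold h1, h2.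
    pose proof (HD s); unfold D in *; auto_derive; [lra | field; lra]. }
  assert (Hh2 : forall s, 0 <= s -> 0 <= h2 s).
  { intros s _; unfold h2. pose proof (HD s). pose proof (exp_pos (- s)).
    assert (p * (1 - p) * exp (- s) <= D s ^ 2 / 4).
    { unfold D in *. pose proof (pow2_ge_0 (1 - p - p * exp (- s))). nra. }
    enough (p * (1 - p) * exp (- s) / D s ^ 2 <= / 4) by lra.
    apply Rmult_le_reg_r with (D s ^ 2); [nra |].
    unfold Rdiv; rewrite Rmult_assoc, Rinv_l by nra. lra. }
  assert (D0 : D 0 = 1) by (unfold D; rewrite Ropp_0, exp_0; ring).
  assert (Hh1 : forall s, 0 <= s -> 0 <= h1 s).
  { apply (nonneg_of_deriv_nonneg h1 h2 Dh1); [| exact Hh2].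
    unfold h1; rewrite D0, Ropp_0, exp_0; field. }
  assert (Hh : 0 <= h t).
  { apply (nonneg_of_deriv_nonneg h h1 Dh); [| exact Hh1 | exact Ht].
    unfold h; rewrite D0, ln_1. nra. }
  replace (p * exp (- t) + (1 - p)) with (exp (ln (D t)))
    by (rewrite exp_ln by apply HD; unfold D; ring).
  apply exp_le_compat. unfold h in Hh. lra.
Qed.

Lemma sumR_app (l1 l2 : list R) : sumR (l1 ++ l2) = sumR l1 + sumR l2.
Proof. induction l1; simpl; [| rewrite IHl1]; ring. Qed.

Lemma sumR_scal {A} (a : R) (f : A -> R) (l : list A) :
  sumR (map (fun x => a * f x) l) = a * sumR (map f l).
Proof. induction l; simpl; [| rewrite IHl]; ring. Qed.

Lemma sumR_plus {A} (f g : A -> R) (l : list A) :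
  sumR (map (fun x => f x + g x) l) = sumR (map f l) + sumR (map g l).
Proof. induction l; simpl; [| rewrite IHl]; ring. Qed.

Lemma sumR_ext {A} (f g : A -> R) (l : list A) :
  (forall x, In x l -> f x = g x) -> sumR (map f l) = sumR (map g l).
Proof. intros H; f_equal; apply map_ext_in, H. Qed.

Lemma sumR_le {A} (f g : A -> R) (l : list A) :
  (forall x, In x l -> f x <= g x) -> sumR (map f l) <= sumR (map g l).
Proof.
  induction l as [| a l IH]; simpl; intros H; [lra |].
  pose proof (H a (or_introl eq_refl)). pose proof (IH (fun x Hx => H x (or_intror Hx))). lra.
Qed.

Lemma sumR_nonneg {A} (f : A -> R) (l : list A) :
  (forall x, In x l -> 0 <= f x) -> 0 <= sumR (map f l).
Proof.
  intros H. replace 0 with (sumR (map (fun _ => 0) l)) by (clear H; induction l; simpl; lra).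
  apply sumR_le, H.
Qed.

Lemma sumR_filter_le {A} (g : A -> R) (P P' : A -> bool) (l : list A) :
  (forall a, In a l -> P a = true -> P' a = true) -> (forall a, 0 <= g a) ->
  sumR (map g (filter P l)) <= sumR (map g (filter P' l)).
Proof.
  induction l as [| a l IH]; intros H Hg; simpl; [lra |].
  pose proof (IH (fun x Hx => H x (or_intror Hx)) Hg).
  destruct (P a) eqn:Pa; [rewrite (H a (or_introl eq_refl) Pa) |
                          destruct (P' a); [pose proof (Hg a) |]]; simpl; lra.
Qed.

Lemma sumR_indicator_seq (v : R) (k s M : nat) :
  sumR (map (fun n => if Nat.eqb k n then v else 0) (seq s M)) =
  if andb (Nat.leb s k) (Nat.ltb k (s + M)) then v else 0.
Proof.
  revert s; induction M as [| M IH]; intros s; simpl.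
  - destruct (Nat.leb_spec s k), (Nat.ltb_spec k (s + 0)); simpl; lra || lia.
  - rewrite IH. destruct (Nat.eqb_spec k s) as [-> |].
    + rewrite Nat.leb_refl, (proj2 (Nat.leb_gt _ _)) by lia; simpl.
      destruct (Nat.ltb_spec s (s + S M)); [ring | lia].
    + destruct (Nat.leb_spec s k), (Nat.leb_spec (S s) k), (Nat.ltb_spec k (S s + M)),
        (Nat.ltb_spec k (s + S M)); simpl; try ring; lia.
Qed.

Lemma sumR_group_by {A} (key : A -> nat) (g : A -> R) (l : list A) (M : nat) :
  (forall a, In a l -> (1 <= key a <= M)%nat) ->
  sumR (map g l) =
  sumR (map (fun n => sumR (map g (filter (fun a => Nat.eqb (key a) n) l))) (seq 1 M)).
Proof.
  induction l as [| a l IH]; intros H; simpl.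
  - induction (seq 1 M); simpl; lra.
  - rewrite (sumR_ext _ (fun n => (if Nat.eqb (key a) n then g a else 0) +
        sumR (map g (filter (fun a => Nat.eqb (key a) n) l))))
      by (intros n _; destruct (Nat.eqb (key a) n); simpl; ring).
    rewrite sumR_plus, sumR_indicator_seq, <- IH by (intros; apply H; right; auto).
    pose proof (H a (or_introl eq_refl)).
    destruct (Nat.leb_spec 1 (key a)), (Nat.ltb_spec (key a) (1 + M)); simpl; lra || lia.
Qed.

Lemma le_fold_Rmax (y : R) (l : list R) : In y l -> y <= fold_right Rmax 0 l.
Proof.
  induction l; simpl; [intros [] |].
  intros [-> | H]; [apply Rmax_l | eapply Rle_trans; [apply IHl; auto | apply Rmax_r]].
Qed.

Lemma fold_Rmax_le (b : R) (l : list R) :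
  0 <= b -> (forall y, In y l -> y <= b) -> fold_right Rmax 0 l <= b.
Proof.
  induction l; simpl; intros Hb H; [lra |].
  apply Rmax_lub; [apply H; left | apply IHl]; auto.
Qed.

Lemma fold_Rmax_nonneg (l : list R) : 0 <= fold_right Rmax 0 l.
Proof. induction l; simpl; [lra | eapply Rle_trans; [apply IHl | apply Rmax_r]]. Qed.

(** * Expectation under the product Bernoulli measure *)

Definition expect (p : R) (M : nat) (f : list bool -> R) : R :=
  sumR (map (fun w => weight p w * f w) (bool_lists M)).

Lemma expect_succ p M f : expect p (S M) f =
  p * expect p M (fun w => f (true :: w)) + (1 - p) * expect p M (fun w => f (false :: w)).
Proof.
  unfold expect; simpl. rewrite map_app, sumR_app, !map_map, <- !sumR_scal.
  f_equal; f_equal; apply map_ext; intros; simpl; ring.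
Qed.

Lemma weight_nonneg p w : 0 <= p <= 1 -> 0 <= weight p w.
Proof.
  intros Hp; induction w as [| b w IH]; simpl; [lra |].
  destruct b; apply Rmult_le_pos; lra.
Qed.

Lemma expect_le p M f g : 0 <= p <= 1 -> (forall w, f w <= g w) ->
  expect p M f <= expect p M g.
Proof.
  intros Hp H; apply sumR_le; intros w _.
  apply Rmult_le_compat_l; [apply weight_nonneg | apply H]; auto.
Qed.

Lemma expect_const p M a : expect p M (fun _ => a) = a.
Proof. induction M; [unfold expect; simpl; ring | rewrite expect_succ, IHM; ring]. Qed.

Lemma expect_scal p M a f : expect p M (fun w => a * f w) = a * expect p M f.
Proof. unfold expect; rewrite <- sumR_scal; apply sumR_ext; intros; ring. Qed.

Lemma expect_plus p M f g : expect p M (fun w => f w + g w) = expect p M f + expect p M g.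
Proof. unfold expect; rewrite <- sumR_plus; apply sumR_ext; intros; ring. Qed.

(** * Sums of chi_n against weights depending on the later coordinates *)

Definition chi_sum (phi : nat -> list bool -> R) (M : nat) (w : list bool) : R :=
  sumR (map (fun n => chi w n * phi n (skipn n w)) (seq 1 M)).
Definition phi_sum (phi : nat -> list bool -> R) (M : nat) (w : list bool) : R :=
  sumR (map (fun n => phi n (skipn n w)) (seq 1 M)).
Definition phi_sqsum (phi : nat -> list bool -> R) (M : nat) (w : list bool) : R :=
  sumR (map (fun n => phi n (skipn n w) ^ 2) (seq 1 M)).

Lemma seq_1_succ M : seq 1 (S M) = 1%nat :: map S (seq 1 M).
Proof. simpl; rewrite seq_shift; reflexivity. Qed.

Lemma chi_sum_cons phi M b w :
  chi_sum phi (S M) (b :: w) = (if b then 1 else 0) * phi 1%nat w + chi_sum (fun n => phi (S n)) M w.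
Proof.
  unfold chi_sum; rewrite seq_1_succ; simpl; rewrite map_map; f_equal.
  apply sumR_ext; intros n Hn; apply in_seq in Hn.
  destruct n as [| n]; [lia |]. unfold chi; simpl; rewrite Nat.sub_0_r; reflexivity.
Qed.

Lemma phi_sum_cons phi M b w :
  phi_sum phi (S M) (b :: w) = phi 1%nat w + phi_sum (fun n => phi (S n)) M w.
Proof. unfold phi_sum; rewrite seq_1_succ; simpl; rewrite map_map; reflexivity. Qed.

Lemma phi_sqsum_cons phi M b w :
  phi_sqsum phi (S M) (b :: w) = phi 1%nat w ^ 2 + phi_sqsum (fun n => phi (S n)) M w.
Proof. unfold phi_sqsum; rewrite seq_1_succ; simpl; rewrite map_map; reflexivity. Qed.

Lemma expect_exp_chi_sum_le p l M phi : 0 < p < 1 -> 0 <= l -> (forall n v, 0 <= phi n v) ->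
  expect p M (fun w =>
    exp (- l * chi_sum phi M w + l * p * phi_sum phi M w - l ^ 2 / 4 * phi_sqsum phi M w)) <= 1.
Proof.
  intros Hp Hl; revert phi; induction M as [| M IH]; intros phi Hphi.
  { unfold expect; simpl; unfold chi_sum, phi_sum, phi_sqsum; simpl.
    match goal with |- context [exp ?z] => replace z with 0 by ring end.
    rewrite exp_0; lra. }
  rewrite expect_succ, <- !expect_scal, <- expect_plus.
  eapply Rle_trans; [| apply (IH (fun n => phi (S n))); auto].
  apply expect_le; [lra | intros w].
  rewrite !chi_sum_cons, !phi_sum_cons, !phi_sqsum_cons.
  set (a := phi 1%nat w).
  set (G := exp (- l * chi_sum (fun n => phi (S n)) M w + l * p * phi_sum (fun n => phi (S n)) M w
                 - l ^ 2 / 4 * phi_sqsum (fun n => phi (S n)) M w)).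
  set (X := - p * (l * a) + (l * a) ^ 2 / 4).
  assert (Ha : 0 <= a) by apply Hphi.
  pose proof (bernoulli_exp_moment_le p (l * a) Hp ltac:(nra)) as Hb; fold X in Hb.
  assert (HX : exp X * exp (- X) = 1) by (rewrite <- exp_plus, Rplus_opp_r; apply exp_0).
  replace (exp (- l * (1 * a + _) + _ - _)) with (exp (- (l * a)) * exp (- X) * G)
    by (unfold G, X; rewrite <- !exp_plus; f_equal; field).
  replace (exp (- l * (0 * a + _) + _ - _)) with (exp (- X) * G)
    by (unfold G, X; rewrite <- exp_plus; f_equal; field).
  pose proof (exp_pos (- X)). assert (0 < G) by apply exp_pos.
  assert ((p * exp (- (l * a)) + (1 - p)) * exp (- X) <= 1) by nra.
  nra.
Qed.

Lemma chi_sum_lower_tail p M phi (x y K : R) :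
  0 < p < 1 -> (forall n v, 0 <= phi n v) ->
  (forall w, phi_sqsum phi M w <= K) -> 0 < K -> x <= y ->
  expect p M (fun w => if Rle_dec (chi_sum phi M w) x
                       then if Rle_dec y (p * phi_sum phi M w) then 1 else 0 else 0)
  <= exp (- (y - x) ^ 2 / K).
Proof.
  intros Hp Hphi HQ HK Hxy.
  set (l := 2 * (y - x) / K).
  assert (Hl : 0 <= l) by (apply Rmult_le_pos; [lra | left; apply Rinv_0_lt_compat; lra]).
  set (F := fun w => exp (- l * chi_sum phi M w + l * p * phi_sum phi M w
                          - l ^ 2 / 4 * phi_sqsum phi M w)).
  apply Rle_trans with (expect p M (fun w => exp (- (y - x) ^ 2 / K) * F w)).
  - apply expect_le; [lra | intros w]. unfold F.
    pose proof (exp_pos (- (y - x) ^ 2 / K)). pose proof (exp_pos (- l * chi_sum phi M w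
      + l * p * phi_sum phi M w - l ^ 2 / 4 * phi_sqsum phi M w)).
    destruct (Rle_dec (chi_sum phi M w) x) as [HS |]; [| nra].
    destruct (Rle_dec y (p * phi_sum phi M w)) as [HT |]; [| nra].
    rewrite <- exp_plus.
    (* with this choice of l, the exponent is - (y-x)^2/K plus nonnegative slack *)
    replace (- (y - x) ^ 2 / K) with (l * x - l * y + l ^ 2 * K / 4) by (unfold l; field; lra).
    pose proof (HQ w).
    assert (0 <= l * (x - chi_sum phi M w) + l * (p * phi_sum phi M w - y)
                 + l ^ 2 / 4 * (K - phi_sqsum phi M w)) by nra.
    match goal with |- _ <= exp ?z => pose proof (exp_ineq1_le z) end. nra.
  - rewrite expect_scal. pose proof (exp_pos (- (y - x) ^ 2 / K)).
    pose proof (expect_exp_chi_sum_le p l M phi Hp Hl Hphi) as Hmgf; fold F in Hmgf. nra.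
Qed.

(** * Multi-indices and the truncated chaoses *)

Lemma in_sublists k (l a : list nat) : In a (sublists k l) ->
  length a = k /\ incl a l /\ (StronglySorted lt l -> StronglySorted lt a).
Proof.
  revert k a; induction l as [| x l IH]; intros k a Ha.
  - destruct k; simpl in Ha; [| contradiction].
    destruct Ha as [<- | []]. repeat split; [intros i [] | constructor].
  - destruct k as [| k]; simpl in Ha.
    { destruct Ha as [<- | []]. repeat split; [intros i [] | constructor]. }
    apply in_app_or in Ha; destruct Ha as [Ha | Ha].
    + apply in_map_iff in Ha; destruct Ha as [a' [<- Ha']].
      destruct (IH _ _ Ha') as [Hlen [Hincl Hsort]]. repeat split.
      * simpl; lia.
      * intros i [<- | Hi]; [left | right; apply Hincl]; auto.
      * intros Hs; inversion Hs; subst. constructor; [auto |].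
        rewrite Forall_forall in *; auto.
    + destruct (IH _ _ Ha) as [Hlen [Hincl Hsort]]. repeat split; auto.
      * intros i Hi; right; auto.
      * intros Hs; inversion Hs; auto.
Qed.

Lemma StronglySorted_seq s n : StronglySorted lt (seq s n).
Proof.
  revert s; induction n; intros s; simpl; constructor; auto.
  apply Forall_forall; intros i Hi; apply in_seq in Hi; lia.
Qed.

Lemma StronglySorted_skipn (l : list nat) d :
  StronglySorted lt l -> StronglySorted lt (skipn d l).
Proof.
  revert d; induction l as [| x l IH]; intros d Hs; destruct d; simpl; auto.
  apply IH; inversion Hs; auto.
Qed.

Lemma skipn_nth_cons (l : list nat) d :
  (d < length l)%nat -> skipn d l = nth d l 0%nat :: skipn (S d) l.
Proof.
  revert d; induction l as [| x l IH]; intros d Hd; simpl in *; [lia |].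
  destruct d; [reflexivity | apply IH; lia].
Qed.

Lemma chi_alpha_skipn w s (a : list nat) : (forall i, In i a -> (s < i)%nat) ->
  chi_alpha w a = chi_alpha (skipn s w) (map (fun i => i - s)%nat a).
Proof.
  induction a as [| i a IH]; intros H; [reflexivity |]; simpl.
  rewrite IH by (intros; apply H; right; auto). f_equal.
  unfold chi; rewrite nth_skipn.
  pose proof (H i (or_introl eq_refl)).
  replace (s + (i - s - 1))%nat with (i - 1)%nat by lia; reflexivity.
Qed.

Lemma chi_alpha_bounds w a : 0 <= chi_alpha w a <= 1.
Proof.
  induction a as [| i a IH]; simpl; [lra |].
  unfold chi; destruct (nth (i - 1) w false); lra.
Qed.

Lemma delta2_nonneg N M c : 0 <= delta2 N M c.
Proof. apply fold_Rmax_nonneg. Qed.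

Lemma delta2_le_normc2 N M c : delta2 N M c <= normc2 N M c.
Proof.
  assert (Hpos : forall L, 0 <= sumR (map (fun a => c a ^ 2) L))
    by (intros; apply sumR_nonneg; intros; apply pow2_ge_0).
  apply fold_Rmax_le; [apply Hpos |]. intros y Hy.
  apply in_map_iff in Hy; destruct Hy as [n [<- _]].
  unfold normc2; rewrite <- (List.filter_true (multi_indices N M)) at 2.
  apply sumR_filter_le; [reflexivity | intros; apply pow2_ge_0].
Qed.

Section TruncatedChaos.

Variables (N M : nat) (c : list nat -> R).

Definition Psi_drop (d : nat) (w : list bool) : R :=
  sumR (map (fun a => c a ^ 2 * chi_alpha w (skipn d a)) (multi_indices N M)).

(* The coefficient of chi_n in [Psi_drop d], written as a function of the coordinates
   after n (the multi-indices with a_{d+1} = n; [nth] is 0-based). *)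
Definition drop_weight (d n : nat) (v : list bool) : R :=
  sumR (map (fun a => c a ^ 2 * chi_alpha v (map (fun i => i - n)%nat (skipn (S d) a)))
            (filter (fun a => Nat.eqb (nth d a 0%nat) n) (multi_indices N M))).

Lemma in_multi_indices a : In a (multi_indices N M) ->
  length a = N /\ (forall i, In i a -> (1 <= i <= M)%nat) /\ StronglySorted lt a.
Proof.
  intros H; destruct (in_sublists _ _ _ H) as [Hlen [Hincl Hsort]].
  split; [exact Hlen | split; [| apply Hsort, StronglySorted_seq]].
  intros i Hi; apply Hincl, in_seq in Hi; lia.
Qed.

Lemma nth_multi_index_In a d : In a (multi_indices N M) -> (d < N)%nat -> In (nth d a 0%nat) a.
Proof. intros Ha Hd; apply nth_In; rewrite (proj1 (in_multi_indices a Ha)); exact Hd. Qed.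

Lemma skipn_multi_index a d : In a (multi_indices N M) -> (d < N)%nat ->
  skipn d a = nth d a 0%nat :: skipn (S d) a /\
  forall i, In i (skipn (S d) a) -> (nth d a 0%nat < i)%nat.
Proof.
  intros Ha Hd; destruct (in_multi_indices a Ha) as [Hlen [_ Hsort]].
  assert (Hs : skipn d a = nth d a 0%nat :: skipn (S d) a) by (apply skipn_nth_cons; lia).
  split; [exact Hs |].
  pose proof (StronglySorted_skipn a d Hsort) as HS; rewrite Hs in HS.
  inversion HS as [| ? ? _ Hall]; rewrite Forall_forall in Hall; exact Hall.
Qed.

Lemma Psi_drop_chi_sum d w : (d < N)%nat -> Psi_drop d w = chi_sum (drop_weight d) M w.
Proof.
  intros Hd; unfold Psi_drop; rewrite (sumR_group_by (fun a => nth d a 0%nat) _ _ M)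
    by (intros a Ha; apply (in_multi_indices a Ha), nth_multi_index_In; auto).
  apply sumR_ext; intros n _; unfold drop_weight; rewrite <- sumR_scal.
  apply sumR_ext; intros a Ha; apply filter_In in Ha; destruct Ha as [Ha Heq].
  apply Nat.eqb_eq in Heq; destruct (skipn_multi_index a d Ha Hd) as [-> Hgt].
  rewrite Heq in Hgt; simpl; rewrite Heq, (chi_alpha_skipn w n) by exact Hgt; ring.
Qed.

Lemma Psi_drop_succ_phi_sum d w : (d < N)%nat -> Psi_drop (S d) w = phi_sum (drop_weight d) M w.
Proof.
  intros Hd; unfold Psi_drop; rewrite (sumR_group_by (fun a => nth d a 0%nat) _ _ M)
    by (intros a Ha; apply (in_multi_indices a Ha), nth_multi_index_In; auto).
  apply sumR_ext; intros n _; apply sumR_ext; intros a Ha.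
  apply filter_In in Ha; destruct Ha as [Ha Heq]; apply Nat.eqb_eq in Heq.
  destruct (skipn_multi_index a d Ha Hd) as [_ Hgt]; rewrite Heq in Hgt.
  rewrite (chi_alpha_skipn w n) by exact Hgt; reflexivity.
Qed.

Lemma drop_weight_nonneg d n v : 0 <= drop_weight d n v.
Proof.
  apply sumR_nonneg; intros a _.
  pose proof (chi_alpha_bounds v (map (fun i => i - n)%nat (skipn (S d) a))).
  pose proof (pow2_ge_0 (c a)); nra.
Qed.

Lemma drop_weight_le_delta2 d n v : (d < N)%nat -> (1 <= n <= M)%nat ->
  drop_weight d n v <= delta2 N M c.
Proof.
  intros Hd Hn; eapply Rle_trans.
  { apply (sumR_le _ (fun a => c a ^ 2)); intros a _.
    pose proof (chi_alpha_bounds v (map (fun i => i - n)%nat (skipn (S d) a))).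
    pose proof (pow2_ge_0 (c a)); nra. }
  eapply Rle_trans.
  { apply (sumR_filter_le _ _ (fun a => existsb (Nat.eqb n) a)); [| intros; apply pow2_ge_0].
    intros a Ha Heq; apply Nat.eqb_eq in Heq; apply existsb_exists.
    exists n; split; [| apply Nat.eqb_refl]. rewrite <- Heq; apply nth_multi_index_In; auto. }
  apply le_fold_Rmax, in_map_iff; exists n; split; [reflexivity | apply in_seq; lia].
Qed.

Lemma Psi_drop_bounds d w : 0 <= Psi_drop d w <= normc2 N M c.
Proof.
  split; [apply sumR_nonneg | apply sumR_le]; intros a _;
    pose proof (chi_alpha_bounds w (skipn d a)); pose proof (pow2_ge_0 (c a)); nra.
Qed.

Lemma Psi_drop_all w : Psi_drop N w = normc2 N M c.
Proof.
  apply sumR_ext; intros a Ha.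
  rewrite skipn_all2 by (rewrite (proj1 (in_multi_indices a Ha)); lia); simpl; ring.
Qed.

Lemma phi_sqsum_drop_weight_le d w : (d < N)%nat ->
  phi_sqsum (drop_weight d) M w <= delta2 N M c * normc2 N M c.
Proof.
  intros Hd; eapply Rle_trans.
  { apply (sumR_le _ (fun n => delta2 N M c * drop_weight d n (skipn n w))).
    intros n Hn; apply in_seq in Hn.
    pose proof (drop_weight_nonneg d n (skipn n w)).
    pose proof (drop_weight_le_delta2 d n (skipn n w) Hd ltac:(lia)); nra. }
  rewrite sumR_scal; fold (phi_sum (drop_weight d) M w).
  rewrite <- Psi_drop_succ_phi_sum by exact Hd.
  pose proof (Psi_drop_bounds (S d) w). pose proof (delta2_nonneg N M c); nra.
Qed.

Variable p : R.
Hypothesis Hp : 0 < p < 1.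
Hypothesis Hdelta : 0 < delta2 N M c.

Lemma delta2_mul_normc2_pos : 0 < delta2 N M c * normc2 N M c.
Proof. pose proof (delta2_le_normc2 N M c); nra. Qed.

Definition prob_drop_le (d : nat) (z : R) : R :=
  expect p M (fun w => if Rle_dec (Psi_drop d w) z then 1 else 0).

Lemma prob_drop_le_impossible d z : (forall w, z < Psi_drop d w) -> prob_drop_le d z = 0.
Proof.
  intros H; rewrite <- (expect_const p M 0); unfold expect, prob_drop_le.
  apply sumR_ext; intros w _; destruct (Rle_dec (Psi_drop d w) z); [pose proof (H w) |]; lra.
Qed.

Lemma prob_drop_le_step d z : (d < N)%nat -> 0 <= z ->
  prob_drop_le d z <= exp (- z ^ 2 / (delta2 N M c * normc2 N M c)) + prob_drop_le (S d) (2 * z / p).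
Proof.
  intros Hd Hz.
  apply Rle_trans with (expect p M (fun w =>
    (if Rle_dec (chi_sum (drop_weight d) M w) z
     then if Rle_dec (2 * z) (p * phi_sum (drop_weight d) M w) then 1 else 0 else 0)
    + (if Rle_dec (Psi_drop (S d) w) (2 * z / p) then 1 else 0))).
  - apply expect_le; [lra | intros w].
    rewrite <- Psi_drop_chi_sum, <- Psi_drop_succ_phi_sum by exact Hd.
    destruct (Rle_dec (Psi_drop d w) z); [| destruct (Rle_dec _ (2 * z / p)); lra].
    destruct (Rle_dec (2 * z) _) as [| Hlt]; [destruct (Rle_dec _ (2 * z / p)); lra |].
    destruct (Rle_dec (Psi_drop (S d) w) (2 * z / p)) as [| Hn]; [lra | exfalso; apply Hn].
    replace (Psi_drop (S d) w) with (p * Psi_drop (S d) w / p) by (field; lra).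
    unfold Rdiv; apply Rmult_le_compat_r; [left; apply Rinv_0_lt_compat |]; lra.
  - rewrite expect_plus; apply Rplus_le_compat_r.
    replace (z ^ 2) with ((2 * z - z) ^ 2) by ring.
    apply chi_sum_lower_tail; [exact Hp | apply drop_weight_nonneg | | apply delta2_mul_normc2_pos | lra].
    intros w; apply phi_sqsum_drop_weight_le, Hd.
Qed.

Lemma prob_drop_le_bound j d z : (d + j = N)%nat -> (2 / p) ^ j * z < normc2 N M c ->
  prob_drop_le d z <= INR j * exp (- z ^ 2 / (delta2 N M c * normc2 N M c)).
Proof.
  revert d z; induction j as [| j IH]; intros d z Hdj Hz.
  { replace d with N by lia. rewrite prob_drop_le_impossible; [simpl; lra |].
    intros w; rewrite Psi_drop_all; simpl in Hz; lra. }
  set (K := delta2 N M c * normc2 N M c).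
  pose proof (exp_pos (- z ^ 2 / K)). pose proof (pos_INR j).
  destruct (Rlt_le_dec z 0) as [Hneg | Hz0].
  { rewrite prob_drop_le_impossible.
    - rewrite S_INR; nra.
    - intros w; pose proof (Psi_drop_bounds d w); lra. }
  assert (Hexp : exp (- (2 * z / p) ^ 2 / K) <= exp (- z ^ 2 / K)).
  { assert (HK : 0 < K) by apply delta2_mul_normc2_pos.
    apply exp_le_compat; unfold Rdiv; apply Rmult_le_compat_r; [left; apply Rinv_0_lt_compat; lra |].
    enough (z <= 2 * z * / p) by nra.
    replace z with (p * z * / p) at 1 by (field; lra).
    apply Rmult_le_compat_r; [left; apply Rinv_0_lt_compat |]; nra. }
  pose proof (IH (S d) (2 * z / p) ltac:(lia)
    ltac:(simpl in Hz; replace ((2 / p) ^ j * (2 * z / p)) with (2 / p * (2 / p) ^ j * z)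
      by (field; lra); exact Hz)) as Hrest.
  pose proof (prob_drop_le_step d z ltac:(lia) Hz0) as Hstep.
  fold K in Hrest, Hstep. rewrite S_INR. nra.
Qed.

End TruncatedChaos.

Theorem lemmaA1 (p : R) (N M : nat) (c : list nat -> R) (x : R) :
  0 < p < 1 ->
  (1 <= N)%nat ->
  (* c is supported on multi-indices with entries in 1..M *)
  (forall a, valid_index N a -> (exists i, In i a /\ (M < i)%nat) -> c a = 0) ->
  0 < deltaN N M c ->
  x < (p / 2) ^ N * normc2 N M c ->
  prob_Psi_le p N M c x
    <= 2 * exp 3 / 9 * INR N
       * exp (- (x ^ 2) / ((deltaN N M c) ^ 2 * normc2 N M c)).
Proof.
  intros Hp _ _ Hdel Hx.
  assert (Hdelta2 : deltaN N M c ^ 2 = delta2 N M c)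
    by (apply pow2_sqrt, delta2_nonneg).
  assert (Hconst : 1 <= 2 * exp 3 / 9).
  { replace 3 with (3 / 2 + 3 / 2) by field; rewrite exp_plus.
    pose proof (exp_ineq1_le (3 / 2)); nra. }
  assert (Hscale : (2 / p) ^ N * x < normc2 N M c).
  { assert (H2p : 0 < (2 / p) ^ N) by (apply pow_lt; apply Rdiv_lt_0_compat; lra).
    replace (normc2 N M c) with ((2 / p) ^ N * ((p / 2) ^ N * normc2 N M c))
      by (rewrite <- Rmult_assoc, <- Rpow_mult_distr; replace (2 / p * (p / 2)) with 1
            by (field; lra); rewrite pow1; ring).
    nra. }
  pose proof (prob_drop_le_bound N M c p Hp ltac:(rewrite <- Hdelta2; nra) N 0 x eq_refl Hscale)
    as Hbound.
  change (prob_Psi_le p N M c x) with (prob_drop_le N M c p 0 x).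
  rewrite Hdelta2; eapply Rle_trans; [exact Hbound |].
  apply Rmult_le_compat_r; [left; apply exp_pos |].
  pose proof (pos_INR N); nra.
Qed.
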